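(* Let $n\ge2$, $A=\{a_1,\dots,a_k\}$ finite, and $u_1,\dots,u_n:A\to\mathbb{R}$. In the Bid, Price \& Choose game defined in the context: (i) in every subgame-perfect Nash equilibrium the realized option is efficient (whatever the realization of the random draws), and every efficient option is the realized option of some subgame-perfect Nash equilibrium; (ii) in every subgame-perfect Nash equilibrium, the expected equilibrium payoffs $U^1,\dots,U^n$ satisfy $U^i-U^j=\mathrm{Avg}_i-\mathrm{Avg}_j$ for all $i,j$.
   Context: Players have quasi-linear utilities $u_i(a)+t_i$ and are expected-payoff maximizers. $\mathrm{Avg}_i=\frac1k\sum_l u_i(a_l)$; an option $a$ is efficient if it maximizes $\sum_{i=1}^n u_i(a)$ over $A$. Let $P=\{p\in\mathbb{R}^k:\sum_j p_j=0\}$. The $P^{n-1}\&C$ game with order of players $(\pi_1,\dots,\pi_n)$: $\pi_1$ chooses $p^2\in P$; for $m=2,\dots,n-1$, $\pi_m$, having observed $p^2,\dots,p^m$, chooses $p^{m+1}\in P$; $\pi_n$, having observed all prices, chooses $a\in A$; then $\pi_n$ pays $p^n(a)$ to $\pi_{n-1}$ and each $\pi_m$, $2\le m\le n-1$, pays $p^m(a)$ to $\pi_{m-1}$ and receives $p^{m+1}(a)$ from $\pi_{m+1}$. The Bid, Price \& Choose game: each player simultaneously submits a bid $b_i\ge0$; let $W=\{i:b_i=\max_j b_j\}$; one $i\in W$ is drawn uniformly at random, pays $b_i$ and becomes the first mover $\pi_1$, and every other player receives $b_i/(n-1)$; the order of the remaining players is drawn uniformly at random and made known; then the $P^{n-1}\&C$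 game is played in that order. A subgame-perfect Nash equilibrium is a profile of pure strategies (bids, and history-dependent price/option choices) inducing a Nash equilibrium (in expected payoffs) in every subgame. *)

From HB Require Import structures.
From mathcomp Require Import all_boot all_order all_algebra.
From mathcomp Require Import fingroup perm.
From mathcomp Require Import reals.
Set Implicit Arguments. Unset Strict Implicit. Unset Printing Implicit Defensive.
Import Order.TTheory GRing.Theory Num.Theory.
Local Open Scope ring_scope.

(* An order of players is a permutation sg : {perm 'I_n}, where
   val (sg i) is the (0-based) position of player i; position 0 is the
   first mover pi_1 (the auction winner).
   A price vector is a function 'I_k -> R; it lies in P iff it sums to 0.
   The price list ps = [:: p^2; ...; p^n] has index m <-> p^(m+2),
   chosen by the player at position m. *)

Section BPC.
Variables (R : realType) (n k : nat).

Definition price_vec := 'I_k -> R.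

Definition inP (p : price_vec) : bool := \sum_(j < k) p j == 0.

Definition argmax (b : 'I_n -> R) : {set 'I_n} :=
  [set i | [forall j, b j <= b i]].

(* a draw (winner + order of the others) is valid for bids b iff the first
   mover is a highest bidder; the draw is uniform over all valid orders *)
Definition valid_draw (b : 'I_n -> R) (sg : {perm 'I_n}) : bool :=
  [forall i, (val (sg i) == 0%N) ==> (i \in argmax b)].

Definition draws (b : 'I_n -> R) : {set {perm 'I_n}} :=
  [set sg | valid_draw b sg].

(* A history after the bids is (b, sg, ps): the bid vector, the
   realized order, and the prices announced so far.  The mover at a price
   node with size ps = j is the player at position j; at the choice node
   (size ps = n-1) the mover is the player at position n-1. *)
Record profile := Profile {
  bid : 'I_n -> R;
  price : ('I_n -> R) -> {perm 'I_n} -> seq price_vec -> price_vec;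
  choice : ('I_n -> R) -> {perm 'I_n} -> seq price_vec -> 'I_k }.

Definition valid_profile (s : profile) : Prop :=
  (forall i, 0 <= bid s i) /\ (forall b sg ps, inP (price s b sg ps)).

Definition deviation (i : 'I_n) (s s' : profile) : Prop :=
  [/\ valid_profile s',
      (forall j, j != i -> bid s' j = bid s j),
      (forall b (sg : {perm 'I_n}) ps, val (sg i) != size ps -> price s' b sg ps = price s b sg ps)
    & (forall b (sg : {perm 'I_n}) ps, val (sg i) != n.-1 -> choice s' b sg ps = choice s b sg ps)].

Fixpoint extend (pr : seq price_vec -> price_vec) (m : nat) (ps : seq price_vec)
  : seq price_vec :=
  match m with
  | 0 => ps
  | m'.+1 => extend pr m' (rcons ps (pr ps))
  end.

Definition final_prices (s : profile) b sg ps : seq price_vec :=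
  extend (price s b sg) (n.-1 - size ps) ps.

Definition outcome_option (s : profile) b sg ps : 'I_k :=
  choice s b sg (final_prices s b sg ps).

Variable u : 'I_n -> 'I_k -> R.

Definition payoff (i : 'I_n) (b : 'I_n -> R) (sg : {perm 'I_n})
    (ps : seq price_vec) (a : 'I_k) : R :=
  let m := val (sg i) in
  let winner_bid := \sum_(j | val (sg j) == 0%N) b j in
  let bid_tr := if m == 0%N then - b i else winner_bid / (n.-1)%:R in
  let recv := if (m < n.-1)%N then nth (fun _ => 0) ps m a else 0 in
  let paid := if (0 < m)%N then nth (fun _ => 0) ps m.-1 a else 0 in
  u i a + bid_tr + (recv - paid).

Definition pay_node (s : profile) i b sg ps : R :=
  let fps := final_prices s b sg ps in
  payoff i b sg fps (choice s b sg fps).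

Definition pay_chance (s : profile) i b : R :=
  (#|draws b|%:R)^-1 * \sum_(sg in draws b) pay_node s i b sg [::].

Definition pay_root (s : profile) i : R := pay_chance s i (bid s).

Definition valid_node (b : 'I_n -> R) sg (ps : seq price_vec) : Prop :=
  [/\ (forall j, 0 <= b j), valid_draw b sg, all inP ps & (size ps <= n.-1)%N].

Definition SPNE (s : profile) : Prop :=
  valid_profile s /\
  forall i s', deviation i s s' ->
    [/\ pay_root s' i <= pay_root s i,
        (forall b, (forall j, 0 <= b j) -> pay_chance s' i b <= pay_chance s i b)
      & (forall b sg ps, valid_node b sg ps -> pay_node s' i b sg ps <= pay_node s i b sg ps)].

Definition realized (s : profile) (sg : {perm 'I_n}) : 'I_k :=
  outcome_option s (bid s) sg [::].

Definition efficient (a : 'I_k) : Prop :=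
  forall a', \sum_(i < n) u i a' <= \sum_(i < n) u i a.

Definition Avg (i : 'I_n) : R := (k%:R)^-1 * \sum_(l < k) u i l.

End BPC.

From HB Require Import structures.
From mathcomp Require Import all_boot all_order all_algebra.
From mathcomp Require Import fingroup perm.
From mathcomp Require Import reals.
From mathcomp Require Import zify ring lra.
Import Order.TTheory GRing.Theory Num.Theory.
Local Open Scope ring_scope.
Set Implicit Arguments. Unset Strict Implicit. Unset Printing Implicit Defensive.

(* The followers of the player
   at position m end up choosing an option that maximizes their joint welfare net
   of the price p^m he owes; by posting a price that is forcing up to e he can steer
   them to any option, so in equilibrium the outcome maximizes this net welfare and
   his own price makes the followers' net welfare constant, equal to its average.
   Hence the outcome is efficient, every player but the first mover gets exactly
   his average utility Avg_i besides his share of the winning bid, and the first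
   mover gets Avg_i plus the surplus max W - avg W minus his bid.  In the auction a
   strict top bidder could profitably lower his bid, so the top bid T is tied;
   outbidding it by e and dropping to 0 then show that the winner's premium
   surplus - T - T/(n-1) vanishes, so everybody gets Avg_i + T/(n-1).  Conversely,
   standard prices, the bid surplus (n-1)/n and a chooser who best-responds to the
   last non-standard price form an equilibrium realizing any efficient option. *)

Section Extend.
Variables (R : realType) (k : nat).
Local Notation pv := (price_vec R k).
Implicit Types (pr : seq pv -> pv) (ps : seq pv).

Lemma extend_cat pr d ps : exists t, extend pr d ps = ps ++ t.
Proof.
elim: d ps => [|d IH] ps /=; first by exists [::]; rewrite cats0.
by have [t ->] := IH (rcons ps (pr ps)); exists (pr ps :: t); rewrite -cats1 -catA.
Qed.

Lemma nth_extend_prefix x0 pr d ps j : (j < size ps)%N ->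
  nth x0 (extend pr d ps) j = nth x0 ps j.
Proof. by move=> hj; have [t ->] := extend_cat pr d ps; rewrite nth_cat hj. Qed.

Lemma nth_extend_size x0 pr d ps : (0 < d)%N ->
  nth x0 (extend pr d ps) (size ps) = pr ps.
Proof.
case: d => [//|d] _ /=.
by rewrite nth_extend_prefix ?size_rcons // nth_rcons ltnn eqxx.
Qed.

Lemma nth_extend_sized x0 pr (F : nat -> pv) d ps j :
  (forall ps', pr ps' = F (size ps')) -> (size ps <= j < size ps + d)%N ->
  nth x0 (extend pr d ps) j = F j.
Proof.
move=> hF; elim: d ps => [|d IH] ps /=; first by rewrite addn0; lia.
move=> hj; case: (eqVneq j (size ps)) => [->|hne].
  by rewrite nth_extend_prefix ?size_rcons // nth_rcons ltnn eqxx hF.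
by apply: IH; rewrite size_rcons; lia.
Qed.

Lemma eq_extend pr1 pr2 d ps :
  (forall ps', (size ps <= size ps')%N -> pr1 ps' = pr2 ps') ->
  extend pr1 d ps = extend pr2 d ps.
Proof.
elim: d ps => [|d IH] ps H //=; rewrite H // IH // => ps' h.
by apply: H; apply: leq_trans h; rewrite size_rcons.
Qed.

End Extend.

Section Averages.
Variables (R : realType) (k : nat).
Hypothesis k_gt0 : (0 < k)%N.
Implicit Types (f g : 'I_k -> R).

Definition avg f : R := (k%:R)^-1 * \sum_(l < k) f l.

Lemma k_neq0 : (k%:R : R) != 0. Proof. by rewrite pnatr_eq0 -lt0n. Qed.

Lemma mulr_k_avg f : k%:R * avg f = \sum_(l < k) f l.
Proof. by rewrite /avg mulrA divff ?mul1r // k_neq0. Qed.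

Lemma sumr_cst_k (c : R) : \sum_(l < k) c = k%:R * c.
Proof. by rewrite sumr_const card_ord mulr_natl. Qed.

Lemma avg_cst (c : R) : avg (fun _ => c) = c.
Proof. by rewrite /avg sumr_cst_k mulrA mulVf ?mul1r // k_neq0. Qed.

Lemma eq_avg f g : f =1 g -> avg f = avg g.
Proof. by move=> h; rewrite /avg (eq_bigr _ (fun l _ => h l)). Qed.

Lemma avgD f g : avg (fun a => f a + g a) = avg f + avg g.
Proof. by rewrite /avg big_split mulrDr. Qed.

Lemma avgB f g : avg (fun a => f a - g a) = avg f - avg g.
Proof. by rewrite /avg sumrB mulrBr. Qed.

Lemma avgB_inP f (p : price_vec R k) : inP p -> avg (fun a => f a - p a) = avg f.
Proof. by move=> /eqP hp; rewrite avgB /avg hp mulr0 subr0. Qed.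

Lemma avg_le_ub f (c : R) : (forall a, f a <= c) -> avg f <= c.
Proof.
move=> h; rewrite -[leRHS](avg_cst c) /avg.
by rewrite ler_wpM2l ?invr_ge0 ?ler0n //; apply: ler_sum.
Qed.

Lemma avg_eq_ub f (c : R) : (forall a, f a <= c) -> avg f = c -> forall a, f a = c.
Proof.
move=> h havg a.
have hsum : \sum_(l < k) (c - f l) = 0.
  by rewrite sumrB sumr_cst_k -mulr_k_avg havg subrr.
have hge : forall l : 'I_k, predT l -> 0 <= c - f l by move=> l _; rewrite subr_ge0.
by have := psumr_eq0P hge hsum (isT : predT a); lra.
Qed.

Definition forcing_price (X : 'I_k -> R) (a1 : 'I_k) (e : R) : price_vec R k :=
  fun x => X x - avg X - e * (x == a1)%:R + e / k%:R.

Lemma forcing_price_inP X a1 e : inP (forcing_price X a1 e).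
Proof.
rewrite /inP /forcing_price !big_split /= !sumrN -mulr_k_avg !sumr_cst_k.
rewrite (bigD1 a1) //= eqxx mulr1 big1 => [|x /negbTE ->]; last by rewrite mulr0.
by rewrite [k%:R * (e / _)]mulrC divfK ?k_neq0 // addr0 subrr sub0r addNr.
Qed.

(* If followers maximize [X - p], posting [forcing_price X a1 e] makes them pick [a1]. *)
Lemma forcing_price_argmax X a1 (e : R) a' : 0 < e ->
  (forall x, X x - forcing_price X a1 e x <= X a' - forcing_price X a1 e a') -> a' = a1.
Proof.
move=> he /(_ a1); rewrite /forcing_price eqxx mulr1.
by case: (eqVneq a' a1) => // _; rewrite mulr0n => h; exfalso; lra.
Qed.

End Averages.

Section PriceGame.
Variables (R : realType) (n k : nat) (u : 'I_n -> 'I_k -> R).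
Hypotheses (n_ge2 : (2 <= n)%N) (k_gt0 : (0 < k)%N).

Local Notation pv := (price_vec R k).
Local Notation prof := (profile R n k).
Local Notation nthp := (nth (fun _ => 0 : R)).
Implicit Types (s : prof) (sg : {perm 'I_n}) (ps : seq pv) (b : 'I_n -> R) (a : 'I_k).

Definition welfare a : R := \sum_(j < n) u j a.

Definition tail_welfare sg m a : R := \sum_(j | (m <= val (sg j))%N) u j a.

(* Positions are 0-based: the player at position [m] pays the price set at
   position [m.-1], stored at index [m.-1] of [ps]; the first mover pays nothing. *)
Definition paid_price ps m a : R := if (0 < m)%N then nthp ps m.-1 a else 0.

Definition node_value sg ps a : R :=
  tail_welfare sg (size ps) a - paid_price ps (size ps) a.

Definition bid_transfer b sg i : R :=
  if val (sg i) == 0%N then - b i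
  else (\sum_(j | val (sg j) == 0%N) b j) / (n.-1)%:R.

Definition net_pay s i b sg ps : R := pay_node u s i b sg ps - bid_transfer b sg i.

Lemma pos_ltn sg (i : 'I_n) : (val (sg i) < n)%N. Proof. exact: ltn_ord. Qed.

Definition player_at sg (m : 'I_n) : 'I_n := (sg^-1)%g m.

Lemma pos_player_at sg m : val (sg (player_at sg m)) = m.
Proof. by rewrite permKV. Qed.

Lemma tail_welfare0 sg a : tail_welfare sg 0 a = welfare a.
Proof. by apply: eq_bigl. Qed.

Lemma tail_welfareS sg (i : 'I_n) m a : val (sg i) = m ->
  tail_welfare sg m a = u i a + tail_welfare sg m.+1 a.
Proof.
move=> hi; rewrite /tail_welfare (bigD1 i) /=; last by rewrite hi.
congr (_ + _); apply: eq_bigl => j.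
case: (eqVneq j i) => [->|hji]; first by rewrite hi ltnn andbF.
have : val (sg j) != m.
  by rewrite -hi; apply/eqP => /val_inj /perm_inj /eqP; rewrite (negbTE hji).
by rewrite andbT ltn_neqAle eq_sym => ->.
Qed.

Lemma tail_welfare_n sg a : tail_welfare sg n a = 0.
Proof. by rewrite /tail_welfare big_pred0 // => j; rewrite leqNgt ltn_ord. Qed.

Lemma tail_welfare_last sg (i : 'I_n) a : val (sg i) = n.-1 ->
  tail_welfare sg n.-1 a = u i a.
Proof.
by move=> hi; rewrite (tail_welfareS _ hi) prednK ?tail_welfare_n ?addr0 //; lia.
Qed.

Lemma avg_tail_welfareS sg (i : 'I_n) m : val (sg i) = m ->
  avg (tail_welfare sg m) = Avg u i + avg (tail_welfare sg m.+1).
Proof. by move=> hi; rewrite (eq_avg (fun a => tail_welfareS a hi)) avgD. Qed.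

Lemma paid_price_rcons ps x m a : (m <= size ps)%N ->
  paid_price (rcons ps x) m a = paid_price ps m a.
Proof. by rewrite /paid_price; case: m => [//|m] h /=; rewrite nth_rcons h. Qed.

Lemma paid_price_rcons_last ps x a : paid_price (rcons ps x) (size ps).+1 a = x a.
Proof. by rewrite /paid_price /= nth_rcons ltnn eqxx. Qed.

Lemma paid_price_prefix ps ps' m a : (m <= size ps)%N ->
  (forall j, (j < size ps)%N -> nthp ps' j = nthp ps j) ->
  (if (0 < m)%N then nthp ps' m.-1 a else 0) = paid_price ps m a.
Proof. by move=> hm h; rewrite /paid_price; case: m hm => [//|m] hm /=; rewrite h. Qed.

Lemma nth_final_prices_prefix s b sg ps j : (j < size ps)%N ->
  nthp (final_prices s b sg ps) j = nthp ps j.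
Proof. exact: nth_extend_prefix. Qed.

Lemma nth_final_prices_size s b sg ps : (size ps < n.-1)%N ->
  nthp (final_prices s b sg ps) (size ps) = price s b sg ps.
Proof. by move=> h; rewrite /final_prices nth_extend_size // subn_gt0. Qed.

Lemma final_prices_last s b sg ps : size ps = n.-1 -> final_prices s b sg ps = ps.
Proof. by move=> h; rewrite /final_prices h subnn. Qed.

Lemma final_prices_rcons s b sg ps : (size ps < n.-1)%N ->
  final_prices s b sg (rcons ps (price s b sg ps)) = final_prices s b sg ps.
Proof. by move=> h; rewrite /final_prices size_rcons -(subnSK h). Qed.

Lemma pay_node_rcons s j b sg ps : (size ps < n.-1)%N ->
  pay_node u s j b sg (rcons ps (price s b sg ps)) = pay_node u s j b sg ps.
Proof. by move=> h; rewrite /pay_node final_prices_rcons. Qed.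

Lemma outcome_option_rcons s b sg ps : (size ps < n.-1)%N ->
  outcome_option s b sg (rcons ps (price s b sg ps)) = outcome_option s b sg ps.
Proof. by move=> h; rewrite /outcome_option final_prices_rcons. Qed.

Lemma net_pay_rcons s j b sg ps : (size ps < n.-1)%N ->
  net_pay s j b sg (rcons ps (price s b sg ps)) = net_pay s j b sg ps.
Proof. by move=> h; rewrite /net_pay pay_node_rcons. Qed.

Lemma pay_nodeE s i b sg ps : pay_node u s i b sg ps = net_pay s i b sg ps + bid_transfer b sg i.
Proof. by rewrite /net_pay subrK. Qed.

Lemma net_pay_mover s (i : 'I_n) b sg ps :
  val (sg i) = size ps -> (size ps < n.-1)%N ->
  let a := outcome_option s b sg ps in
  net_pay s i b sg ps = u i a + price s b sg ps a - paid_price ps (size ps) a.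
Proof.
move=> hi hs; rewrite /net_pay /pay_node /payoff -/(bid_transfer b sg i) hi hs.
rewrite nth_final_prices_size // (paid_price_prefix (ps := ps)) //.
  by rewrite /outcome_option; lra.
by move=> j hj; rewrite nth_final_prices_prefix.
Qed.

Lemma net_pay_chooser s (i : 'I_n) b sg ps :
  val (sg i) = n.-1 -> size ps = n.-1 ->
  let a := outcome_option s b sg ps in
  net_pay s i b sg ps = u i a - paid_price ps n.-1 a.
Proof.
move=> hi hs; rewrite /net_pay /pay_node /payoff -/(bid_transfer b sg i) hi ltnn.
rewrite /outcome_option final_prices_last // /paid_price.
have -> : (0 < n.-1)%N by lia.
lra.
Qed.

Lemma net_pay_earlier s (i : 'I_n) b sg ps :
  (val (sg i) < size ps)%N -> (size ps <= n.-1)%N ->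
  let a := outcome_option s b sg ps in
  net_pay s i b sg ps = u i a + nthp ps (val (sg i)) a - paid_price ps (val (sg i)) a.
Proof.
move=> hi hs; rewrite /net_pay /pay_node /payoff -/(bid_transfer b sg i).
have -> : (val (sg i) < n.-1)%N by lia.
rewrite nth_final_prices_prefix // (paid_price_prefix (ps := ps)) ?(ltnW hi) //.
  by rewrite /outcome_option; lra.
by move=> j hj; rewrite nth_final_prices_prefix.
Qed.

Definition with_bid s (b' : 'I_n -> R) : prof := Profile b' (price s) (choice s).

Definition with_price s (i : 'I_n) (p : pv) : prof :=
  Profile (bid s) (fun b sg ps => if val (sg i) == size ps then p else price s b sg ps)
    (choice s).

Definition with_choice s (i : 'I_n) a : prof :=
  Profile (bid s) (price s)
    (fun b sg ps => if val (sg i) == n.-1 then a else choice s b sg ps).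

Lemma deviation_with_bid s i (b' : 'I_n -> R) : valid_profile s ->
  (forall j, j != i -> b' j = bid s j) -> 0 <= b' i -> deviation i s (with_bid s b').
Proof.
case=> hb hp hb' hi; split => //; split => //= j.
by case: (eqVneq j i) => [->|hj] //; rewrite hb'.
Qed.

Lemma deviation_with_price s i (p : pv) : valid_profile s -> inP p ->
  deviation i s (with_price s i p).
Proof.
case=> hb hp hin; split => //=; last by move=> b sg ps /negbTE ->.
by split => // b sg ps /=; case: ifP.
Qed.

Lemma deviation_with_choice s i a : valid_profile s -> deviation i s (with_choice s i a).
Proof. by move=> hs; split => //= b sg ps /negbTE ->. Qed.

Section Deviation.
Variables (i : 'I_n) (s s' : prof).
Hypothesis dev : deviation i s s'.

Lemma final_prices_deviation_after b sg ps : (val (sg i) < size ps)%N ->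
  final_prices s' b sg ps = final_prices s b sg ps.
Proof.
case: dev => _ _ hp _ h; apply: eq_extend => ps' h'.
by apply: hp; rewrite neq_ltn (leq_trans h h').
Qed.

Lemma pay_node_deviation_after j b sg ps :
  (val (sg i) < size ps)%N -> (size ps <= n.-1)%N ->
  pay_node u s' j b sg ps = pay_node u s j b sg ps.
Proof.
move=> h1 h2; rewrite /pay_node final_prices_deviation_after //.
by case: dev => _ _ _ ->; rewrite // neq_ltn; lia.
Qed.

Lemma pay_node_deviation_mover j b sg ps :
  val (sg i) = size ps -> (size ps < n.-1)%N ->
  pay_node u s' j b sg ps = pay_node u s j b sg (rcons ps (price s' b sg ps)).
Proof.
move=> h1 h2; rewrite -(pay_node_rcons s') //.
by rewrite pay_node_deviation_after // size_rcons; lia.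
Qed.

Lemma pay_node_deviation_other j b sg ps :
  val (sg i) != size ps -> (size ps < n.-1)%N ->
  pay_node u s' j b sg ps = pay_node u s' j b sg (rcons ps (price s b sg ps)).
Proof. by move=> h1 h2; case: dev => _ _ hp _; rewrite -hp // pay_node_rcons. Qed.

End Deviation.

Definition price_equilibrium s : Prop := valid_profile s /\
  forall i s', deviation i s s' -> forall b sg ps, valid_node b sg ps ->
    pay_node u s' i b sg ps <= pay_node u s i b sg ps.

Lemma spne_price_equilibrium s : SPNE u s -> price_equilibrium s.
Proof. by case=> hv h; split => // i s' hd; case: (h i s' hd). Qed.

Lemma valid_node_rcons b sg ps x : valid_node b sg ps -> inP x ->
  (size ps < n.-1)%N -> valid_node b sg (rcons ps x).
Proof. by case=> h1 h2 h3 h4 hx hs; split; rewrite ?all_rcons ?hx ?size_rcons. Qed.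

Definition node_solved s b sg ps : Prop :=
  [/\ forall a', node_value sg ps a' <= node_value sg ps (outcome_option s b sg ps),
      forall i, val (sg i) = size ps -> net_pay s i b sg ps =
        node_value sg ps (outcome_option s b sg ps) - avg (tail_welfare sg (size ps).+1)
    & forall j, (size ps < val (sg j))%N -> net_pay s j b sg ps = Avg u j].

Section BackwardInduction.
Variable s : prof.
Hypothesis eq_s : price_equilibrium s.

Lemma node_solved_last b sg ps : valid_node b sg ps -> size ps = n.-1 ->
  node_solved s b sg ps.
Proof.
move=> hv hsz; have hn : (n.-1 < n)%N by lia.
set c := player_at sg (Ordinal hn).
have hc : val (sg c) = n.-1 := pos_player_at sg (Ordinal hn).
have avg_n : avg (tail_welfare sg n) = 0 by rewrite (eq_avg (tail_welfare_n sg)) avg_cst.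
rewrite /node_solved hsz prednK ?avg_n ?subr0; last by lia.
split.
- move=> a'; have dev := deviation_with_choice c a' eq_s.1.
  have := eq_s.2 _ _ dev b sg ps hv.
  rewrite !pay_nodeE lerD2r (net_pay_chooser _ b hc hsz) (net_pay_chooser s b hc hsz).
  rewrite /outcome_option /= final_prices_last // hc eqxx.
  by rewrite /node_value hsz !(tail_welfare_last _ hc).
- by move=> i hi; rewrite (net_pay_chooser s b hi hsz) /node_value hsz (tail_welfare_last _ hi).
- by move=> j; rewrite leqNgt ltn_ord.
Qed.

Section Step.
Variables (b : 'I_n -> R) (sg : {perm 'I_n}) (ps : seq pv).
Hypotheses (hv : valid_node b sg ps) (hlt : (size ps < n.-1)%N).
Hypothesis solved_next : forall x, inP x -> node_solved s b sg (rcons ps x).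

Lemma mover_can_force (i : 'I_n) a1 (e : R) : val (sg i) = size ps -> 0 < e ->
  node_value sg ps a1 - avg (tail_welfare sg (size ps).+1) - e <= net_pay s i b sg ps.
Proof.
move=> hi he; set X := tail_welfare sg (size ps).+1.
set p' := forcing_price X a1 e; have hp' : inP p' := forcing_price_inP k_gt0 X a1 e.
have [hmax _ _] := solved_next hp'.
have ha1 : outcome_option s b sg (rcons ps p') = a1.
  apply: (forcing_price_argmax (X := X) he) => x.
  by have := hmax x; rewrite /node_value size_rcons !paid_price_rcons_last.
have dev := deviation_with_price i eq_s.1 hp'.
have := eq_s.2 _ _ dev b sg ps hv.
rewrite (pay_node_deviation_mover dev) //= hi eqxx !pay_nodeE lerD2r.
rewrite (net_pay_earlier s b) ?size_rcons ?hi // ha1.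
rewrite nth_rcons ltnn eqxx paid_price_rcons // /node_value (tail_welfareS _ hi) -/X.
rewrite /p' /forcing_price eqxx mulr1.
have : 0 <= e / k%:R by rewrite divr_ge0 ?ler0n // ltW.
lra.
Qed.

Lemma node_solved_rcons : node_solved s b sg ps.
Proof.
set m := size ps; set p := price s b sg ps; set a := outcome_option s b sg ps.
set X := tail_welfare sg m.+1.
have hp : inP p by case: eq_s.1 => _; apply.
have [hmax hmover hlater] := solved_next hp.
rewrite size_rcons outcome_option_rcons // -/a in hmax hmover hlater.
have hXmax : forall x, X x - p x <= X a - p a.
  by move=> x; have := hmax x; rewrite /node_value size_rcons !paid_price_rcons_last.
have hm : (m < n)%N by lia.
set i0 := player_at sg (Ordinal hm).
have hi0 : val (sg i0) = m := pos_player_at sg (Ordinal hm).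
have net_i0 : net_pay s i0 b sg ps = node_value sg ps a - (X a - p a).
  by rewrite net_pay_mover // -/a -/p /node_value (tail_welfareS _ hi0) -/X; lra.
have hforce := @mover_can_force i0 _ _ hi0.
rewrite net_i0 in hforce.
have hXa : X a - p a = avg X.
  apply/le_anti/andP; split.
  - by apply/ler_addgt0Pr => e he; have := hforce a e he; lra.
  - by rewrite -(avgB_inP X hp); exact: (avg_le_ub k_gt0 hXmax).
have hXconst : forall x, X x - p x = avg X.
  by apply: (avg_eq_ub k_gt0 (f := fun x => X x - p x)); rewrite -?hXa // avgB_inP.
split.
- by move=> a1; apply/ler_addgt0Pr => e he; have := hforce a1 e he; lra.
- move=> i hi; rewrite net_pay_mover // /node_value (tail_welfareS _ hi) -/X.
  rewrite -/m -/a -/p; lra.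
- move=> j hj; rewrite -net_pay_rcons //.
  case: (eqVneq (val (sg j)) m.+1) => hj1; last by apply: hlater; lia.
  rewrite hmover // /node_value size_rcons paid_price_rcons_last -/X (hXconst a).
  by rewrite (avg_tail_welfareS hj1); lra.
Qed.

End Step.

Lemma node_solved_valid b sg ps : valid_node b sg ps -> node_solved s b sg ps.
Proof.
move=> hv; have [_ _ _ hsz] := hv.
move hd : (n.-1 - size ps)%N => d.
elim: d ps hv hsz hd => [|d IH] ps hv hsz hd.
  by apply: node_solved_last => //; lia.
apply: node_solved_rcons => //; first by lia.
move=> x hx; apply: IH; rewrite ?size_rcons; try lia.
by apply: valid_node_rcons => //; lia.
Qed.

End BackwardInduction.

(* Leaves the players from position [l] on indifferent among all options. *)
Definition std_price sg l : pv := fun x => tail_welfare sg l x - avg (tail_welfare sg l).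

Lemma std_price_inP sg l : inP (std_price sg l).
Proof. by rewrite /inP /std_price sumrB sumr_cst_k mulr_k_avg // subrr. Qed.

Definition is_std_price sg ps l : bool :=
  [forall x, nthp ps l.-1 x == std_price sg l x].

Definition last_deviant sg ps : nat :=
  \max_(l : 'I_n | (0 < val l)%N && ~~ is_std_price sg ps l) val l.

Definition argmax_option (f : 'I_k -> R) : 'I_k := [arg max_(x > Ordinal k_gt0) f x]%O.

Lemma argmax_optionP (f : 'I_k -> R) x : f x <= f (argmax_option f).
Proof. by rewrite /argmax_option; case: arg_maxP => // i _; apply. Qed.

Definition std_profile a0 (B : R) : prof :=
  Profile (fun _ => B) (fun _ sg ps => std_price sg (size ps).+1)
    (fun _ sg ps => let l := last_deviant sg ps in
       if l == 0%N then a0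
       else argmax_option (fun x => tail_welfare sg l x - nthp ps l.-1 x)).

Lemma valid_std_profile a0 B : 0 <= B -> valid_profile (std_profile a0 B).
Proof. by move=> hB; split => //= b sg ps; apply: std_price_inP. Qed.

Section StdProfile.
Variables (a0 : 'I_k) (B : R) (b : 'I_n -> R) (sg : {perm 'I_n}) (ps : seq pv).
Hypothesis hsz : (size ps <= n.-1)%N.
Local Notation fps := (final_prices (std_profile a0 B) b sg ps).

Lemma nth_final_std_prices j : (size ps <= j < n.-1)%N -> nthp fps j = std_price sg j.+1.
Proof.
move=> hj; rewrite /final_prices.
by apply: (nth_extend_sized _ (F := fun j => std_price sg j.+1)) => //; lia.
Qed.

Lemma is_std_final_prices (l : 'I_n) : (size ps < l)%N -> is_std_price sg fps l.
Proof.
move=> hl; have hl' := ltn_ord l; apply/forallP => y.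
by rewrite nth_final_std_prices ?prednK //; lia.
Qed.

Lemma last_deviant_final_le : (last_deviant sg fps <= size ps)%N.
Proof.
apply/bigmax_leqP => l /andP [_]; apply: contraR; rewrite -ltnNge.
exact: is_std_final_prices.
Qed.

Lemma std_profile_value_max : efficient u a0 -> forall x,
  node_value sg ps x <= node_value sg ps (outcome_option (std_profile a0 B) b sg ps).
Proof.
move=> heff x; set m := size ps; set L := last_deviant sg fps.
have hLm : (L <= m)%N := last_deviant_final_le.
have std_m : (L < m)%N -> forall y, node_value sg ps y = avg (tail_welfare sg m).
  move=> hL y; have hm : (m < n)%N by lia.
  have : is_std_price sg fps (Ordinal hm).
    apply: contraT => hns; have := @leq_bigmax_cond _
      (fun l : 'I_n => (0 < val l)%N && ~~ is_std_price sg fps l) val (Ordinal hm).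
    by rewrite /= hns andbT -/(last_deviant _ _) -/L; lia.
  move/forallP/(_ y)/eqP; rewrite /= nth_final_prices_prefix; last by lia.
  by rewrite /node_value /paid_price -/m; case: posnP => [|_ ->]; [lia | rewrite /std_price; lra].
rewrite /outcome_option /= -/L.
case: (ltngtP L m) => [hL|hL|hL]; [by rewrite !std_m | lia |].
case: (posnP m) => [hm0|hm].
  have -> : L = 0%N by lia.
  by rewrite eqxx /node_value -/m hm0 /paid_price !tail_welfare0 !subr0; apply: heff.
have -> : (L == 0%N) = false by apply/negbTE; lia.
have := argmax_optionP (fun x => tail_welfare sg L x - nthp fps L.-1 x) x.
rewrite hL !nth_final_prices_prefix; try lia.
by rewrite /node_value /paid_price -/m hm.
Qed.

End StdProfile.

Lemma std_mover_no_gain a0 B b sg ps (i : 'I_n) (p' : pv) : efficient u a0 ->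
  (size ps < n.-1)%N -> val (sg i) = size ps -> inP p' ->
  pay_node u (std_profile a0 B) i b sg (rcons ps p') <= pay_node u (std_profile a0 B) i b sg ps.
Proof.
move=> heff hlt hi hp'; set s0 := std_profile a0 B.
set a' := outcome_option s0 b sg (rcons ps p'); set a := outcome_option s0 b sg ps.
set X := tail_welfare sg (size ps).+1.
have hsz' : (size (rcons ps p') <= n.-1)%N by rewrite size_rcons.
have hX : avg X <= X a' - p' a'.
  rewrite -(avgB_inP X hp'); apply: (avg_le_ub k_gt0) => x.
  have := std_profile_value_max B b sg hsz' heff x.
  by rewrite /node_value size_rcons !paid_price_rcons_last.
have := std_profile_value_max B b sg (ltnW hlt) heff a'; rewrite -/s0 -/a.
rewrite !pay_nodeE lerD2r (net_pay_earlier s0 b) ?size_rcons ?hi // -/a'.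
rewrite net_pay_mover // -/a nth_rcons ltnn eqxx paid_price_rcons //.
by rewrite /node_value (tail_welfareS a' hi) (tail_welfareS a hi) /= /std_price -/X; lra.
Qed.

Lemma std_profile_equilibrium a0 B : efficient u a0 -> 0 <= B ->
  price_equilibrium (std_profile a0 B).
Proof.
move=> heff hB; split; first exact: valid_std_profile.
move=> i s' dev b sg ps hv; set s0 := std_profile a0 B.
have [_ _ _ hsz] := hv; move hd : (n.-1 - size ps)%N => d.
elim: d ps hv hsz hd => [|d IH] ps hv hsz hd.
  have {}hsz : size ps = n.-1 by lia.
  case: (eqVneq (val (sg i)) n.-1) => hi; last first.
    by rewrite (pay_node_deviation_after dev) //; have := pos_ltn sg i; lia.
  have := std_profile_value_max B b sg (eq_leq hsz) heff (outcome_option s' b sg ps).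
  rewrite !pay_nodeE lerD2r !(net_pay_chooser _ b hi hsz) /node_value hsz.
  by rewrite !(tail_welfare_last _ hi) /outcome_option !final_prices_last.
have hlt : (size ps < n.-1)%N by lia.
case: (ltngtP (val (sg i)) (size ps)) => hi.
- by rewrite (pay_node_deviation_after dev) //; lia.
- rewrite (pay_node_deviation_other dev) ?neq_ltn ?hi ?orbT // -(pay_node_rcons s0) //.
  apply: IH; rewrite ?size_rcons; try lia.
  by apply: valid_node_rcons => //; apply: std_price_inP.
- rewrite (pay_node_deviation_mover dev) //; apply: std_mover_no_gain => //.
  by case: dev => [[_ hp'] _ _ _]; apply: hp'.
Qed.

Lemma n_gt0 : (0 < n)%N. Proof. exact: ltnW. Qed.

Definition first_mover sg : 'I_n := player_at sg (Ordinal n_gt0).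

Lemma pos_eq0 sg j : (val (sg j) == 0%N) = (j == first_mover sg).
Proof.
apply/eqP/eqP => [h|->]; last by rewrite pos_player_at.
by apply: (perm_inj (s := sg)); rewrite permKV; apply: val_inj.
Qed.

Lemma exists_other (i : 'I_n) : exists j : 'I_n, j != i.
Proof.
case: (eqVneq i (Ordinal n_gt0)) => [->|h]; last by exists (Ordinal n_gt0); rewrite eq_sym.
by exists (Ordinal n_ge2); apply/eqP => /(congr1 val).
Qed.

Definition top_bidder b : 'I_n := [arg max_(j > Ordinal n_gt0) b j]%O.

Definition top_bid b : R := b (top_bidder b).

Lemma le_top_bid b j : b j <= top_bid b.
Proof. by rewrite /top_bid /top_bidder; case: arg_maxP => // i _; apply. Qed.

Lemma top_bidE b (B : R) j : (forall j, b j <= B) -> b j = B -> top_bid b = B.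
Proof. by move=> hB hj; apply/le_anti; rewrite hB -{1}hj le_top_bid. Qed.

Lemma first_mover_top b sg : sg \in draws b -> b (first_mover sg) = top_bid b.
Proof.
rewrite inE => /forallP /(_ (first_mover sg)); rewrite pos_eq0 eqxx inE.
move=> /forallP hmax; apply/esym/(top_bidE _ (erefl (b (first_mover sg)))) => j.
exact: hmax.
Qed.

Lemma draw_with_first_mover b i : b i = top_bid b ->
  exists2 sg, sg \in draws b & first_mover sg = i.
Proof.
move=> hi; exists (tperm i (Ordinal n_gt0)); last first.
  by apply/esym/eqP; rewrite -pos_eq0 tpermL.
rewrite inE; apply/forallP => j; apply/implyP => /eqP hj.
have -> : j = i by apply: (@perm_inj _ (tperm i (Ordinal n_gt0))); rewrite tpermL; apply: val_inj.
by rewrite inE; apply/forallP => j'; rewrite hi le_top_bid.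
Qed.

Lemma first_mover_sole_top b sg i : sg \in draws b ->
  (forall j, j != i -> b j < b i) -> first_mover sg = i.
Proof.
move=> hsg hi; apply: contraTeq (le_top_bid b i) => hne.
by rewrite -ltNge -(first_mover_top hsg) hi.
Qed.

Lemma card_draws_neq0 b : (#|draws b|%:R : R) != 0.
Proof.
have [sg hsg _] := @draw_with_first_mover b (top_bidder b) erefl.
by rewrite pnatr_eq0 -lt0n; apply/card_gt0P; exists sg.
Qed.

Definition win_freq b i : R :=
  (#|draws b|%:R)^-1 * \sum_(sg in draws b) (first_mover sg == i)%:R.

Lemma win_freq_const b i (c : bool) :
  (forall sg, sg \in draws b -> (first_mover sg == i) = c) -> win_freq b i = c%:R.
Proof.
move=> h; rewrite /win_freq (eq_bigr (fun=> (c%:R : R))) => [|sg /h -> //].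
rewrite sumr_const -mulr_natr; field; exact: card_draws_neq0.
Qed.

Lemma win_freq_gt0 b i sg : sg \in draws b -> first_mover sg = i -> 0 < win_freq b i.
Proof.
move=> hsg hi; rewrite /win_freq; apply: mulr_gt0.
  by rewrite invr_gt0 lt0r card_draws_neq0 ler0n.
rewrite (bigD1 sg) //= hi eqxx.
have : 0 <= \sum_(x in draws b | x != sg) ((first_mover x == i)%:R : R).
  by apply: sumr_ge0 => x _; rewrite ler0n.
rewrite /= mulr1n; lra.
Qed.

Lemma win_freq_lt1 b i sg : sg \in draws b -> first_mover sg != i -> win_freq b i < 1.
Proof.
move=> hsg hi; have hN : 0 < (#|draws b|%:R : R) by rewrite lt0r card_draws_neq0 ler0n.
rewrite /win_freq ltr_pdivrMl // mulr1.
have -> : (#|draws b|%:R : R) = \sum_(x in draws b) 1 by rewrite sumr_const.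
rewrite [X in _ < X](bigD1 sg) //= (bigD1 sg) //= (negbTE hi).
have : \sum_(x in draws b | x != sg) ((first_mover x == i)%:R : R) <= \sum_(x in draws b | x != sg) 1.
  by apply: ler_sum => x _; rewrite lern1 leq_b1.
rewrite /= mulr0n; lra.
Qed.

Lemma pay_chance_affine s i b (c e : R) :
  (forall sg, sg \in draws b -> pay_node u s i b sg [::] = c + e * (first_mover sg == i)%:R) ->
  pay_chance u s i b = c + e * win_freq b i.
Proof.
move=> h; rewrite /pay_chance /win_freq (eq_bigr _ h) big_split /= sumr_const -mulr_sumr.
have hN := card_draws_neq0 b; rewrite -mulr_natl.
by field.
Qed.

Lemma ler_pay_chance s s' i b :
  (forall sg, sg \in draws b -> pay_node u s' i b sg [::] <= pay_node u s i b sg [::]) ->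
  pay_chance u s' i b <= pay_chance u s i b.
Proof. by move=> h; rewrite /pay_chance ler_wpM2l ?invr_ge0 ?ler0n // ler_sum. Qed.

Definition max_welfare : R := welfare (argmax_option welfare).

Lemma efficient_welfare a : efficient u a -> welfare a = max_welfare.
Proof. by move=> heff; apply/le_anti/andP; split; [exact: argmax_optionP | exact: heff]. Qed.

Definition surplus : R := max_welfare - avg welfare.

Lemma surplus_ge0 : 0 <= surplus.
Proof. by rewrite subr_ge0; apply: (avg_le_ub k_gt0) => a; exact: argmax_optionP. Qed.

(* Winning the auction rather than losing it is worth [win_premium T] when the top bid is [T]. *)
Definition win_premium (T : R) : R := surplus - T - T / (n.-1)%:R.

Section RootNode.
Variables (s : prof) (b : 'I_n -> R) (sg : {perm 'I_n}).
Hypotheses (eq_s : price_equilibrium s) (b_ge0 : forall j, 0 <= b j) (hsg : sg \in draws b).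

Lemma root_node_solved : node_solved s b sg [::].
Proof. by apply: node_solved_valid => //; split => //; move: hsg; rewrite inE. Qed.

Lemma efficient_root_outcome : efficient u (outcome_option s b sg [::]).
Proof.
move=> a'; have [hmax _ _] := root_node_solved.
by have := hmax a'; rewrite /node_value /paid_price /= !tail_welfare0 !subr0.
Qed.

Lemma pay_node_root i : pay_node u s i b sg [::] = Avg u i + top_bid b / (n.-1)%:R
  + win_premium (top_bid b) * (first_mover sg == i)%:R.
Proof.
have [_ hmover hlater] := root_node_solved.
rewrite pay_nodeE /bid_transfer.
have -> : \sum_(j | val (sg j) == 0%N) b j = top_bid b.
  by rewrite (big_pred1 (first_mover sg)) ?(first_mover_top hsg) // => j; rewrite /= pos_eq0.
rewrite pos_eq0 eq_sym.
case: (eqVneq (first_mover sg) i) => [<-|hi]; last first.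
  by rewrite hlater ?mulr0 ?addr0 // lt0n pos_eq0 eq_sym.
have hfm : val (sg (first_mover sg)) = 0%N by apply/eqP; rewrite pos_eq0.
have hwel : avg (tail_welfare sg 1) = avg welfare - Avg u (first_mover sg).
  rewrite -(eq_avg (tail_welfare0 sg)) (avg_tail_welfareS hfm); lra.
rewrite (hmover _ hfm) hwel /node_value /paid_price /= tail_welfare0.
rewrite (efficient_welfare efficient_root_outcome) (first_mover_top hsg) /win_premium /surplus.
lra.
Qed.

End RootNode.

Section ChanceNode.
Variables (s : prof) (b : 'I_n -> R).
Hypotheses (eq_s : price_equilibrium s) (b_ge0 : forall j, 0 <= b j).

Lemma pay_chance_root i : pay_chance u s i b =
  Avg u i + top_bid b / (n.-1)%:R + win_premium (top_bid b) * win_freq b i.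
Proof. by apply: pay_chance_affine => sg hsg; apply: pay_node_root. Qed.

Lemma pay_chance_sole_top i : (forall j, j != i -> b j < b i) ->
  pay_chance u s i b = Avg u i + surplus - b i.
Proof.
move=> htop; have hbi : top_bid b = b i.
  by apply: top_bidE => // j; case: (eqVneq j i) => [->|/htop /ltW].
rewrite pay_chance_root (@win_freq_const _ _ true) => [|sg hsg].
  by rewrite hbi /win_premium /= mulr1n; lra.
by rewrite (first_mover_sole_top hsg htop) eqxx.
Qed.

Lemma pay_chance_below_top i j : b i < b j ->
  pay_chance u s i b = Avg u i + top_bid b / (n.-1)%:R.
Proof.
move=> hij; rewrite pay_chance_root (@win_freq_const _ _ false) ?mulr0 ?addr0 // => sg hsg.
apply/negbTE; apply: contraTneq (le_top_bid b j) => hfm.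
by rewrite -ltNge -(first_mover_top hsg) hfm.
Qed.

End ChanceNode.

Definition set_bid b i (x : R) : 'I_n -> R := fun j => if j == i then x else b j.

Lemma set_bid_same b i x : set_bid b i x i = x.
Proof. by rewrite /set_bid eqxx. Qed.

Lemma set_bid_other b i x j : j != i -> set_bid b i x j = b j.
Proof. by rewrite /set_bid => /negbTE ->. Qed.

Lemma set_bid_ge0 b i x : (forall j, 0 <= b j) -> 0 <= x -> forall j, 0 <= set_bid b i x j.
Proof. by move=> hb hx j; rewrite /set_bid; case: ifP. Qed.

Section SubgamePerfect.
Variable s : prof.
Hypothesis spne : SPNE u s.
Local Notation b := (bid s).
Local Notation T := (top_bid b).

Let eq_s : price_equilibrium s := spne_price_equilibrium spne.
Let b_ge0 : forall j, 0 <= b j. Proof. by case: spne => [[]]. Qed.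

Lemma spne_no_bid_gain i (x : R) : 0 <= x -> pay_chance u s i (set_bid b i x) <= pay_root u s i.
Proof.
move=> hx; have dev : deviation i s (with_bid s (set_bid b i x)).
  by apply: deviation_with_bid; rewrite ?set_bid_same //; [case: spne | move=> j /set_bid_other].
by case: spne => _ /(_ i _ dev) [].
Qed.

Lemma spne_top_tied : exists i j, [/\ i != j, b i = T & b j = T].
Proof.
set w := top_bidder b.
case: (boolP [exists j, (j != w) && (b j == top_bid b)]).
  by case/existsP => j /andP [hj /eqP hbj]; exists w, j; rewrite eq_sym.
move=> hno; exfalso.
have hlt : forall j, j != w -> b j < b w.
  move=> j hj; rewrite lt_neqAle le_top_bid andbT; apply: contra hno => /eqP hbj.
  by apply/existsP; exists j; rewrite hj hbj /top_bid -/w eqxx.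
have [j0 hj0] := exists_other w.
set j1 := [arg max_(j > j0 | j != w) b j]%O.
have [hj1 hj1max] : j1 != w /\ forall j, j != w -> b j <= b j1.
  by rewrite /j1; case: arg_maxP => // x hx h; split => // j; apply: h.
have hbj1 := hlt _ hj1; set c := (b w + b j1) / 2.
have hc : 0 <= c by have := b_ge0 j1; rewrite /c; lra.
have := spne_no_bid_gain w hc.
rewrite /pay_root (pay_chance_sole_top eq_s b_ge0 hlt).
rewrite (pay_chance_sole_top eq_s (set_bid_ge0 w b_ge0 hc)) ?set_bid_same; last first.
  by move=> j hj; rewrite set_bid_other // /c; have := hj1max j hj; lra.
by rewrite /c => h; lra.
Qed.

Lemma pay_root_spne i :
  pay_root u s i = Avg u i + T / (n.-1)%:R + win_premium T * win_freq b i.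
Proof. exact: pay_chance_root. Qed.

Lemma spne_win_premium_le0 : win_premium T <= 0.
Proof.
have hwp : win_premium T = surplus - T - T / (n.-1)%:R by [].
have [sg0 hsg0 _] := @draw_with_first_mover b (top_bidder b) erefl.
have [i hi] := exists_other (first_mover sg0).
have hf : 0 < 1 - win_freq b i.
  by rewrite subr_gt0; apply: win_freq_lt1 hsg0 _; rewrite eq_sym.
rewrite -(pmulr_lle0 _ hf); apply/ler_addgt0Pr => e he; rewrite add0r.
have hx : 0 <= T + e by have := b_ge0 i; have := le_top_bid b i; lra.
have := spne_no_bid_gain i hx.
rewrite pay_root_spne (pay_chance_sole_top eq_s (set_bid_ge0 i b_ge0 hx)) ?set_bid_same.
  by rewrite mulrBr mulr1; lra.
by move=> j hj; rewrite set_bid_other //; have := le_top_bid b j; lra.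
Qed.

Lemma spne_win_premium_ge0 : 0 <= win_premium T.
Proof.
have [T0|Tn0] := eqVneq T 0.
  by rewrite /win_premium T0 mul0r !subr0 surplus_ge0.
have [i [j [hij hi hj]]] := spne_top_tied.
have hT : 0 < T by rewrite lt_neqAle eq_sym Tn0 -hi b_ge0.
have hb' := set_bid_ge0 i b_ge0 (lexx 0).
have hj' : set_bid b i 0 j = T by rewrite set_bid_other // eq_sym.
have htop : top_bid (set_bid b i 0) = T.
  by apply: (top_bidE _ hj') => l; rewrite /set_bid; case: ifP => _; [apply: ltW | apply: le_top_bid].
have := spne_no_bid_gain i (lexx 0).
rewrite pay_root_spne (pay_chance_below_top eq_s hb' (j := j)) ?set_bid_same ?hj' // htop.
have [sgi hsgi hfi] := draw_with_first_mover hi.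
by rewrite -(pmulr_lge0 _ (win_freq_gt0 hsgi hfi)); lra.
Qed.

Lemma spne_pay_root i : pay_root u s i = Avg u i + T / (n.-1)%:R.
Proof.
rewrite pay_root_spne.
have -> : win_premium T = 0 by apply/le_anti; rewrite spne_win_premium_le0 spne_win_premium_ge0.
by rewrite mul0r addr0.
Qed.

End SubgamePerfect.

Lemma realized_std_profile a0 B sg : realized (std_profile a0 B) sg = a0.
Proof.
rewrite /realized /outcome_option /=.
suff -> : last_deviant sg (final_prices (std_profile a0 B) (fun _ => B) sg [::]) = 0%N by [].
apply/eqP; rewrite -leqn0; exact: last_deviant_final_le.
Qed.

Definition equilibrium_bid : R := surplus * (n.-1)%:R / n%:R.

Lemma win_premium_equilibrium_bid : win_premium equilibrium_bid = 0.
Proof.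
have hn : (n%:R : R) = (n.-1)%:R + 1 by rewrite natr1 prednK // ltnW.
have hn1 : ((n.-1)%:R : R) != 0 by rewrite pnatr_eq0 -lt0n -ltnS prednK // ltnW.
rewrite /win_premium /equilibrium_bid hn; field.
by rewrite hn1 natr1 pnatr_eq0.
Qed.

Lemma std_profile_spne a0 : efficient u a0 -> SPNE u (std_profile a0 equilibrium_bid).
Proof.
move=> heff; set B := equilibrium_bid; set s := std_profile a0 B.
have hB : 0 <= B.
  by rewrite /B /equilibrium_bid mulr_ge0 ?invr_ge0 ?mulr_ge0 ?ler0n ?surplus_ge0.
have eq_s := std_profile_equilibrium heff hB.
have hBwin : surplus - B = B / (n.-1)%:R.
  by have := win_premium_equilibrium_bid; rewrite /win_premium -/B; lra.
have chance_B i b : (forall j, 0 <= b j) -> top_bid b = B ->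
    pay_chance u s i b = Avg u i + B / (n.-1)%:R.
  by move=> hb htop; rewrite pay_chance_root // htop win_premium_equilibrium_bid mul0r addr0.
split; first exact: valid_std_profile.
move=> i s' dev; have node := eq_s.2 i s' dev.
have chance b : (forall j, 0 <= b j) -> pay_chance u s' i b <= pay_chance u s i b.
  by move=> hb; apply: ler_pay_chance => sg; rewrite inE => hsg; apply: node.
split => //.
have hb' : forall j, 0 <= bid s' j by case: dev => [[]].
have hother : forall j, j != i -> bid s' j = B by case: dev => _ h _ _ j /h.
have root_s : pay_chance u s i (bid s) = Avg u i + B / (n.-1)%:R.
  by apply: chance_B => [j|]; [exact: hB | apply: (@top_bidE (bid s) B i)].
rewrite /pay_root (le_trans (chance _ hb')) // root_s.
case: (ltP B (bid s' i)) => hi.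
  by rewrite (pay_chance_sole_top eq_s hb') => [|j /hother ->] //; lra.
have [j0 hj0] := exists_other i.
rewrite chance_B //; apply: (top_bidE _ (hother j0 hj0)) => j.
by case: (eqVneq j i) => [->|/hother ->].
Qed.

End PriceGame.

Theorem proposition5 (R : realType) (n k : nat) (u : 'I_n -> 'I_k -> R) :
  (2 <= n)%N -> (0 < k)%N ->
  [/\ (forall s : profile R n k, SPNE u s ->
         forall sg, valid_draw (bid s) sg -> efficient u (realized s sg)),
      (forall a : 'I_k, efficient u a ->
         exists s : profile R n k, SPNE u s /\
           forall sg, valid_draw (bid s) sg -> realized s sg = a)
    & (forall s : profile R n k, SPNE u s ->
         forall i j, pay_root u s i - pay_root u s j = Avg u i - Avg u j)].
Proof.
move=> n_ge2 k_gt0; split.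
- move=> s hs sg hsg; apply: (efficient_root_outcome n_ge2 k_gt0 (spne_price_equilibrium hs)).
    by case: hs => [[]].
  by rewrite inE.
- move=> a heff; exists (std_profile u k_gt0 a (equilibrium_bid u k_gt0)).
  split; first exact: std_profile_spne.
  by move=> sg _; apply: realized_std_profile.
- by move=> s hs i j; rewrite !(spne_pay_root n_ge2 k_gt0 hs); lra.
Qed.
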